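(* The maps $\mathfrak{F}_{\pm}$ are diffeomorphisms.
   Context: On the De Sitter–Kerr spacetime (Boyer–Lindquist coordinates $(t,r,\theta,\phi)$, $r\in(r_-,r_+)$), fix $r_0\in(r_-,r_+)$ and let $T(r)=\int_{r_0}^r\frac{\lambda(a^2+r^2)}{\Delta_r}dr$, $A(r)=\int_{r_0}^r\frac{\lambda a}{\Delta_r}dr$ (increasing homeomorphisms $(r_-,r_+)\to\mathbb{R}$). ${}^*$Kerr coordinates: $({}^*t,r,\theta,{}^*\phi)=(t-T(r),r,\theta,\phi-A(r))$; Kerr${}^*$ coordinates: $(t^*,r,\theta,\phi^* )=(t+T(r),r,\theta,\phi+A(r))$. The future horizons are $\mathfrak{H}^{future}_+=\mathbb{R}_{{}^*t}\times\{r_+\}\times\mathbb{S}^2$ and $\mathfrak{H}^{future}_-=\mathbb{R}_{t^*}\times\{r_-\}\times\mathbb{S}^2$, and $\Sigma_0=\{t=0\}$. Define $\mathfrak{F}_+:\Sigma_0\to\mathfrak{H}^{future}_+$, $(0,r,\theta,\phi)\mapsto(-T(r),r_+,\theta,\phi-A(r))_{{}^*\mathrm{Kerr}}$ (mapping the intersection of an outgoing principal null geodesic with $\Sigma_0$ to its intersection with $\mathfrak{H}^{future}_+$), and $\mathfrak{F}_-:\Sigma_0\to\mathfrak{H}^{future}_-$ similarly (along incoming principal null geodesics, in Kerr${}^*$ coordinates). *)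

From HB Require Import structures.
From mathcomp Require Import all_boot all_order all_algebra.
From mathcomp Require Import all_classical all_reals all_analysis.
Set Implicit Arguments. Unset Strict Implicit. Unset Printing Implicit Defensive.
Import Order.TTheory GRing.Theory Num.Theory.
Import numFieldNormedType.Exports.
Local Open Scope classical_set_scope.
Local Open Scope ring_scope.

Section DSK.
Variable R : realType.

(** De Sitter–Kerr metric functions (mass M, angular momentum a, cosmological constant Lam). *)
Definition Delta_r (M a Lam r : R) : R :=
  (r ^+ 2 + a ^+ 2) * (1 - Lam * r ^+ 2 / 3) - 2 * M * r.
Definition lambdaK (a Lam : R) : R := 1 + Lam * a ^+ 2 / 3.

Definition oint (f : R -> R) (x0 x : R) : R :=
  if x0 <= x then Rintegral lebesgue_measure `[x0, x] f
  else - Rintegral lebesgue_measure `[x, x0] f.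

Definition Tfun (M a Lam r0 r : R) : R :=
  oint (fun s => lambdaK a Lam * (a ^+ 2 + s ^+ 2) / Delta_r M a Lam s) r0 r.
Definition Afun (M a Lam r0 r : R) : R :=
  oint (fun s => lambdaK a Lam * a / Delta_r M a Lam s) r0 r.

Definition mk4 (x0 x1 x2 x3 : R) : 'rV[R]_4 :=
  \row_(i < 4) [:: x0; x1; x2; x3]`_i.
Definition c4 (v : 'rV[R]_4) (i : nat) : R := v ord0 (inord i).

(** S^2 is the unit sphere of R^3, with (sin th cos ph, sin th sin ph, cos th)
   the point of polar coordinates (th, ph).
   Sigma_0 = {t = 0} ~ (r_-, r_+) x S^2 with coordinates (r, omega),
   embedded in R^4 as (r, omega). *)
Definition Sigma0 (rm rp : R) : set 'rV[R]_4 :=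
  [set v | rm < c4 v 0 < rp /\ c4 v 1 ^+ 2 + c4 v 2 ^+ 2 + c4 v 3 ^+ 2 = 1].

(** A future horizon R_{s} x {r_pm} x S^2, with coordinates (s, omega)
   (s = *t for H_+, s = t^* for H_-), embedded in R^4 as (s, omega). *)
Definition Horizon : set 'rV[R]_4 :=
  [set v | c4 v 1 ^+ 2 + c4 v 2 ^+ 2 + c4 v 3 ^+ 2 = 1].

(** (s, omega) with omega rotated by angle al about the axis (phi -> phi + al). *)
Definition shift_rot (s al : R) (v : 'rV[R]_4) : 'rV[R]_4 :=
  mk4 s (cos al * c4 v 1 - sin al * c4 v 2)
        (sin al * c4 v 1 + cos al * c4 v 2) (c4 v 3).

(** F_+ : (0, r, th, ph) |-> (-T r, r_+, th, ph - A r) in *Kerr coordinates. *)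
Definition Fplus (M a Lam r0 : R) (v : 'rV[R]_4) : 'rV[R]_4 :=
  shift_rot (- Tfun M a Lam r0 (c4 v 0)) (- Afun M a Lam r0 (c4 v 0)) v.
(** F_- : (0, r, th, ph) |-> (T r, r_-, th, ph + A r) in Kerr* coordinates. *)
Definition Fminus (M a Lam r0 : R) (v : 'rV[R]_4) : 'rV[R]_4 :=
  shift_rot (Tfun M a Lam r0 (c4 v 0)) (Afun M a Lam r0 (c4 v 0)) v.

Fixpoint iterD (vs : seq 'rV[R]_4) (f : 'rV[R]_4 -> 'rV[R]_4) : 'rV[R]_4 -> 'rV[R]_4 :=
  match vs with
  | [::] => f
  | v :: vs' => fun x => derive (iterD vs' f) x v
  end.

Definition smooth_on (U : set 'rV[R]_4) (f : 'rV[R]_4 -> 'rV[R]_4) : Prop :=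
  open U /\
  forall vs : seq 'rV[R]_4,
    (forall x v, U x -> derivable (iterD vs f) x v) /\
    (forall x, U x -> {for x, continuous (iterD vs f)}).

Definition smooth_map (S : set 'rV[R]_4) (f : 'rV[R]_4 -> 'rV[R]_4) : Prop :=
  forall p, S p -> exists U g, U p /\ smooth_on U g /\
    (forall x, U x -> S x -> g x = f x).

Definition diffeomorphism (S N : set 'rV[R]_4) (f : 'rV[R]_4 -> 'rV[R]_4) : Prop :=
  (forall x, S x -> N (f x)) /\ smooth_map S f /\
  exists g, (forall y, N y -> S (g y)) /\
    (forall x, S x -> g (f x) = x) /\ (forall y, N y -> f (g y) = y) /\
    smooth_map N g.

End DSK.

(* The integrand T' = lambda (a^2 + r^2) / Delta_r of T is smooth and positive on
   (r_-, r_+), and Delta_r, a polynomial vanishing at r_- and r_+, is bounded by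
   K (r_+ - r) and by K (r - r_-).  Hence T' >= c / (r_+ - r) and T' >= c / (r - r_-),
   so T grows at least logarithmically at both ends: T is an increasing smooth
   bijection (r_-, r_+) -> R with non-vanishing derivative, and its inverse is smooth.
   In the coordinates (r, omega) of Sigma_0 and (s, omega) of the horizons,
   F_(+/-) is (r, omega) |-> (-/+ T r, omega rotated by -/+ A r), whose inverse is
   (s, omega) |-> (T^-1 (-/+ s), omega rotated by +/- A (T^-1 (-/+ s))). *)

From Pilot Require Import Defs.
From HB Require Import structures.
From mathcomp Require Import all_boot all_order all_algebra.
From mathcomp Require Import all_classical all_reals all_analysis.
From mathcomp Require Import ring lra.
Set Implicit Arguments. Unset Strict Implicit. Unset Printing Implicit Defensive.
Import Order.TTheory GRing.Theory Num.Theory.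
Import numFieldNormedType.Exports.
Local Open Scope classical_set_scope.
Local Open Scope ring_scope.

Lemma near_in_open (T : topologicalType) (U : set T) (x : T) (P : T -> Prop) :
  open U -> U x -> (forall y, U y -> P y) -> \forall y \near x, P y.
Proof. by move=> oU Ux UP; apply: filterS UP _; exact: open_nbhs_nbhs. Qed.

Section Ck.
Context {R : realType}.

Fixpoint Ck {V W : normedModType R} (n : nat) (U : set V) (f : V -> W) : Prop :=
  match n with
  | 0 => forall x, U x -> {for x, continuous f}
  | n.+1 => (forall x, U x -> {for x, continuous f}) /\
            (forall x v, U x -> derivable f x v) /\
            (forall v, Ck n U (fun x => 'D_v f x))
  end.

Variables (V W : normedModType R).
Implicit Types (U : set V) (f g : V -> W).

Lemma Ck_cont n U f : Ck n U f -> forall x, U x -> {for x, continuous f}.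
Proof. by case: n => [|n] //= []. Qed.

Lemma CkS n U f : Ck n.+1 U f -> Ck n U f.
Proof.
elim: n f => [|n IH] f /=; first by case.
by case=> cf [df Df]; split => //; split => // v; exact: IH.
Qed.

Lemma near_eq_continuous f g (x : V) :
  {near x, f =1 g} -> {for x, continuous f} -> {for x, continuous g}.
Proof.
move=> fg cf; rewrite /prop_for /continuous_at -(nbhs_singleton fg).
exact: cvg_trans (near_eq_cvg fg) cf.
Qed.

Lemma Ck_ext n U f g : open U -> (forall x, U x -> f x = g x) ->
  Ck n U f -> Ck n U g.
Proof.
move=> oU; elim: n f g => [|n IH] f g fg.
  by move=> cf x Ux; apply: near_eq_continuous (cf x Ux); exact: near_in_open fg.
have near_fg x : U x -> {near x, f =1 g} by move=> Ux; exact: near_in_open fg.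
move=> [cf [df Df]]; split; [|split].
- by move=> x Ux; exact: near_eq_continuous (near_fg x Ux) (cf x Ux).
- by move=> x v Ux; exact: near_eq_derivable (near_fg x Ux) (df x v Ux).
- by move=> v; apply: IH (Df v) => x Ux; exact: near_eq_derive (near_fg x Ux).
Qed.

Lemma Ck_cst n U (c : W) : Ck n U (fun _ => c).
Proof.
elim: n c => [|n IH] c /=; first by move=> x _; exact: cvg_cst.
split; [|split]; first by move=> x _; exact: cvg_cst.
  by move=> x v _; exact: derivable_cst.
move=> v; have -> : (fun x => 'D_v (fun=> c) x) = (fun _ => 0 : W).
  by apply/funext => x; exact: derive_cst.
exact: IH.
Qed.

Lemma Ck_add n U f g : open U -> Ck n U f -> Ck n U g ->
  Ck n U (fun x => f x + g x).
Proof.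
move=> oU; elim: n f g => [|n IH] f g /=.
  by move=> cf cg x Ux; apply: continuousD; [exact: cf|exact: cg].
move=> [cf [df Df]] [cg [dg Dg]]; split; [|split].
- by move=> x Ux; apply: continuousD; [exact: cf|exact: cg].
- by move=> x v Ux; apply: derivableD; [exact: df|exact: dg].
- move=> v; apply: (Ck_ext (f := fun x => 'D_v f x + 'D_v g x)) (IH _ _ (Df v) (Dg v)) => //.
  by move=> x Ux; rewrite deriveD //; [exact: df|exact: dg].
Qed.

Lemma Ck_opp n U f : open U -> Ck n U f -> Ck n U (fun x => - f x).
Proof.
move=> oU; elim: n f => [|n IH] f /=.
  by move=> cf x Ux; apply: continuousN; exact: cf.
move=> [cf [df Df]]; split; [|split].
- by move=> x Ux; apply: continuousN; exact: cf.
- by move=> x v Ux; apply: derivableN; exact: df.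
- move=> v; apply: (Ck_ext (f := fun x => - 'D_v f x)) (IH _ (Df v)) => //.
  by move=> x Ux; rewrite deriveN //; exact: df.
Qed.

Lemma Ck_sum n U m (F : 'I_m -> V -> W) : open U -> (forall i, Ck n U (F i)) ->
  Ck n U (fun x => \sum_(i < m) F i x).
Proof.
move=> oU; elim: m F => [|m IH] F CF.
  have -> : (fun x => \sum_(i < 0) F i x) = fun=> 0 by apply/funext => x; rewrite big_ord0.
  exact: Ck_cst.
have -> : (fun x => \sum_(i < m.+1) F i x) =
    (fun x => \sum_(i < m) F (widen_ord (leqnSn m) i) x + F ord_max x).
  by apply/funext => x; rewrite big_ord_recr.
by apply: Ck_add oU (IH _ _) (CF _) => i.
Qed.

Lemma is_derive_scale_cst (k : V -> R) (w : W) x v : derivable k x v ->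
  is_derive x v (fun y => k y *: w) ('D_v k x *: w).
Proof.
move=> dk; have D : (fun h => h^-1 *: (((fun y => k y *: w) \o shift x) (h *: v) - k x *: w))
    @ 0^' --> 'D_v k x *: w.
  have -> : (fun h => h^-1 *: (((fun y => k y *: w) \o shift x) (h *: v) - k x *: w)) =
      (fun h => (h^-1 *: ((k \o shift x) (h *: v) - k x)) *: w).
    by apply/funext => h /=; rewrite -scalerA scalerBl.
  exact: cvgZr_tmp.
apply: DeriveDef; first by apply/cvg_ex; exists ('D_v k x *: w).
by apply: cvg_lim D; exact: norm_hausdorff.
Qed.

Lemma Ck_scale_cst n U (k : V -> R) (w : W) : open U -> Ck n U k ->
  Ck n U (fun x => k x *: w).
Proof.
move=> oU; elim: n k => [|n IH] k /=.
  by move=> ck x Ux; apply: continuousZr_tmp; exact: ck.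
move=> [ck [dk Dk]]; split; [|split].
- by move=> x Ux; apply: continuousZr_tmp; exact: ck.
- by move=> x v Ux; have [] := is_derive_scale_cst w (dk x v Ux).
- move=> v; apply: (Ck_ext (f := fun x => 'D_v k x *: w)) (IH _ (Dk v)) => //.
  by move=> x Ux; have [_ ->] := is_derive_scale_cst w (dk x v Ux).
Qed.

Lemma derive_line f x v : 'D_v f x = 'D_1 (fun t : R => f (t *: v + x)) 0.
Proof.
rewrite /derive.
have -> : (fun h : R =>
    h^-1 *: (((fun t : R => f (t *: v + x)) \o shift 0) (h *: 1) - f (0 *: v + x))) =
    (fun h => h^-1 *: ((f \o shift x) (h *: v) - f x)).
  by apply/funext => h; rewrite /= addr0 scale0r add0r [_%:A]mulr1.
by [].
Qed.

End Ck.

Section CkScalar.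
Context {R : realType} {V : normedModType R}.
Implicit Types (U : set V) (f g phi : V -> R).

Lemma Ck_mul n U f g : open U -> Ck n U f -> Ck n U g ->
  Ck n U (fun x => f x * g x).
Proof.
move=> oU; elim: n f g => [|n IH] f g /=.
  by move=> cf cg x Ux; apply: continuousM; [exact: cf|exact: cg].
move=> [cf [df Df]] [cg [dg Dg]]; split; [|split].
- by move=> x Ux; apply: continuousM; [exact: cf|exact: cg].
- by move=> x v Ux; apply: derivableM; [exact: df|exact: dg].
- move=> v; apply: (Ck_ext (f := fun x => f x * 'D_v g x + g x * 'D_v f x)) => //.
    by move=> x Ux; rewrite deriveM //; [exact: df|exact: dg].
  apply: Ck_add => //; apply: IH => //.
  + exact: CkS (conj cf (conj df Df)).
  + exact: CkS (conj cg (conj dg Dg)).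
Qed.

Lemma derive_comp_scalar (h : R -> R) phi x v :
  derivable phi x v -> derivable h (phi x) 1 ->
  derivable (fun y => h (phi y)) x v /\
  'D_v (fun y => h (phi y)) x = 'D_1 h (phi x) * 'D_v phi x.
Proof.
move=> dphi dh; set g := fun t : R => phi (t *: v + x).
have dg : derivable g 0 1 by exact: (derivable1P _ _ _).1 dphi.
have g0 : g 0 = phi x by rewrite /g scale0r add0r.
have dhg : derivable (h \o g) 0 1.
  apply/derivable1_diffP/differentiable_comp; first exact/derivable1_diffP.
  by rewrite g0; exact/derivable1_diffP.
split; first exact: (derivable1P _ _ _).2 dhg.
rewrite derive_line (derive_line phi).
have dh0 : derivable h (g 0) 1 by rewrite g0.
have := derive1_comp dg dh0.
by rewrite !derive1E g0.
Qed.

Lemma Ck_comp n U (J : set R) (h : R -> R) phi :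
  open U -> (forall x, U x -> J (phi x)) -> Ck n J h -> Ck n U phi ->
  Ck n U (fun x => h (phi x)).
Proof.
move=> oU UJ; elim: n h phi UJ => [|n IH] h phi UJ /=.
  move=> ch cphi x Ux; apply: continuous_comp; first exact: cphi.
  exact: ch (UJ _ Ux).
move=> [ch [dh Dh]] [cphi [dphi Dphi]].
have chain x v : U x -> _ := fun Ux => derive_comp_scalar (dphi x v Ux) (dh _ 1 (UJ _ Ux)).
split; [|split].
- move=> x Ux; apply: continuous_comp; first exact: cphi.
  exact: ch (UJ _ Ux).
- by move=> x v Ux; have [] := chain x v Ux.
- move=> v; apply: (Ck_ext (f := fun x => 'D_1 h (phi x) * 'D_v phi x)) => //.
    by move=> x Ux; have [_ ->] := chain x v Ux.
  apply: Ck_mul oU (IH _ _ UJ (Dh 1) _) (Dphi v).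
  exact: CkS (conj cphi (conj dphi Dphi)).
Qed.

Lemma Ck_id n (U : set V) : Ck n U (fun x => x).
Proof.
elim: n => [|n IH] /=; first by move=> x _; exact: cvg_id.
split; [|split]; first by move=> x _; exact: cvg_id.
  by move=> x v _; exact: derivable_id.
move=> v; have -> : (fun x => 'D_v (fun y => y) x) = (fun _ => v).
  by apply/funext => x; exact: derive_id.
exact: Ck_cst.
Qed.

End CkScalar.

Section CkLine.
Context {R : realType}.
Implicit Types (J : set R) (h tau iota : R -> R).

Lemma derive_dir_line h x v : derivable h x 1 ->
  derivable h x v /\ 'D_v h x = v * 'D_1 h x.
Proof.
move=> dh; have dif := (derivable1_diffP h x).1 dh.
by split; [exact: diff_derivable|rewrite deriveE // diff1E // derive1E].
Qed.

Lemma derivable1_continuous h x : derivable h x 1 -> {for x, continuous h}.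
Proof. by move=> dh; apply: differentiable_continuous; exact/derivable1_diffP. Qed.

Lemma open_between (a b : R) : open [set x : R | a < x < b].
Proof.
have -> : [set x : R | a < x < b] = [set` `]a, b[] by apply/seteqP; split => x; rewrite /= in_itv.
exact: itv_open.
Qed.

Lemma Ck_derive1 n J h : open J ->
  (forall x, J x -> derivable h x 1) -> Ck n J (fun x => 'D_1 h x) -> Ck n.+1 J h.
Proof.
move=> oJ dh Dh; split; [|split].
- by move=> x Jx; exact: derivable1_continuous (dh x Jx).
- by move=> x v Jx; have [] := derive_dir_line v (dh x Jx).
- move=> v; apply: (Ck_ext (f := fun x => v * 'D_1 h x)) (Ck_mul oJ (Ck_cst _ _ _) Dh) => //.
  by move=> x Jx; have [_ ->] := derive_dir_line v (dh x Jx).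
Qed.

Lemma Ck_inv n : Ck n [set x : R | x != 0] (fun x => x^-1).
Proof.
have oJ : open [set x : R | x != 0] := @open_neq R 0.
elim: n => [|n IH].
  by move=> x /= x0; apply: continuousV => //; exact: cvg_id.
apply: Ck_derive1 => //.
  by move=> x /= x0; apply: derivableV => //; exact: derivable_id.
apply: (@Ck_ext R R R n _ (fun x => - (x^-1 * x^-1))) => //.
  move=> x /= x0; rewrite (@deriveV R R (fun y => y) x 1 x0 (@derivable_id _ _ x 1)).
  by rewrite derive_id /GRing.scale /= mulr1 -exprVn expr2.
exact/Ck_opp/Ck_mul.
Qed.

Lemma Ck_sin_cos n : Ck n setT (@sin R) /\ Ck n setT (@cos R).
Proof.
elim: n => [|n [Csin Ccos]].
  by split => x _; [exact: continuous_sin|exact: continuous_cos].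
split; apply: Ck_derive1; first exact: openT.
- by move=> x _; exact: derivable_sin.
- by under eq_fun do rewrite derive_val.
- exact: openT.
- by move=> x _; exact: derivable_cos.
- apply: (Ck_ext (f := fun x => - sin x)) (Ck_opp openT Csin); first exact: openT.
  by move=> x _; rewrite derive_val.
Qed.

Lemma Ck_inverse J tau iota : open J -> (forall n, Ck n J tau) ->
  (forall x, J x -> 'D_1 tau x != 0) ->
  (forall y, J (iota y)) -> cancel iota tau -> (forall x, J x -> iota (tau x) = x) ->
  forall n, Ck n setT iota.
Proof.
move=> oJ Ctau Dtau_neq0 iotaJ iotaK tauK.
have dtau x : J x -> derivable tau x 1.
  by move=> Jx; have [_ [d _]] := Ctau 1%N; exact: d.
have diota y : derivable iota y 1 /\ 'D_1 iota y = ('D_1 tau (iota y))^-1.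
  have Jy := iotaJ y.
  have c1 : {near iota y, cancel tau iota} := near_in_open oJ Jy tauK.
  have c2 : {near iota y, continuous tau} := near_in_open oJ Jy (Ck_cont (Ctau 0%N)).
  have d : is_derive (iota y) 1 tau ('D_1 tau (iota y)) := DeriveDef (dtau _ Jy) erefl.
  by have [] := is_derive_inverse c1 c2 d (Dtau_neq0 _ Jy); rewrite iotaK.
have Cinv_dtau n : Ck n J (fun x => ('D_1 tau x)^-1).
  have [_ [_ Dtau]] := Ctau n.+1.
  exact: Ck_comp oJ Dtau_neq0 (Ck_inv n) (Dtau 1).
elim=> [|n IH]; first by move=> y _; exact: derivable1_continuous (diota y).1.
apply: Ck_derive1; [exact: openT|by move=> y _; exact: (diota y).1|].
apply: (Ck_ext (f := fun y => ('D_1 tau (iota y))^-1)); first exact: openT.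
  by move=> y _; rewrite (diota y).2.
exact: Ck_comp openT (fun y _ => iotaJ y) (Cinv_dtau n) IH.
Qed.

Lemma derive_reflect h (s : R) : derivable h (- s) 1 ->
  derivable (fun y => - h (- y)) s 1 /\ 'D_1 (fun y => - h (- y)) s = 'D_1 h (- s).
Proof.
move=> dh; have dN : derivable (fun y : R => - y) s 1 := derivableN (@derivable_id _ _ s 1).
have [dc Dc] := derive_comp_scalar dN dh.
split; first exact: derivableN.
by rewrite deriveN // Dc deriveN // derive_id mulrN1 opprK.
Qed.

Lemma derive_ln_sub (p s : R) : s < p ->
  derivable (fun y => ln (p - y)) s 1 /\ 'D_1 (fun y => ln (p - y)) s = - (p - s)^-1.
Proof.
move=> sp; have dsub : derivable (fun y : R => p - y) s 1.
  exact: derivableB (derivable_cst _ _ _) (@derivable_id _ _ s 1).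
have [dln Dln] : is_derive (p - s) 1 (@ln R) (p - s)^-1.
  by apply: is_derive1_ln; rewrite subr_gt0.
have [d ->] := derive_comp_scalar dsub dln.
by rewrite deriveB ?derive_cst ?derive_id ?sub0r ?Dln ?mulrN1 //; exact: derivable_cst.
Qed.

End CkLine.

Section CkRow.
Context {R : realType} {V : normedModType R}.

Lemma Ck_row n (U : set V) m (f : V -> 'rV[R]_m) : open U ->
  (forall j, Ck n U (fun x => f x ord0 j)) -> Ck n U f.
Proof.
move=> oU Cf; have -> : f = fun x => \sum_(j < m) f x ord0 j *: delta_mx ord0 j.
  by apply/funext => x; exact: row_sum_delta.
apply: (Ck_sum (F := fun j x => f x ord0 j *: delta_mx ord0 j)) => // j.
exact: Ck_scale_cst oU (Cf j).
Qed.

Lemma Ck_coord n m (U : set 'rV[R]_m) (j : 'I_m) : Ck n U (fun x => x ord0 j).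
Proof.
have dq x v : \forall h \near (0 : R)^',
    h^-1 *: (((fun y : 'rV[R]_m => y ord0 j) \o shift x) (h *: v) - x ord0 j) = v ord0 j.
  near=> h; have hn0 : h != 0 by near: h; exact: nbhs_dnbhs_neq.
  by rewrite /= !mxE addrK /GRing.scale /= mulKf.
elim: n => [|n IH] /=; first by move=> x _; exact: coord_continuous.
split; [|split]; first by move=> x _; exact: coord_continuous.
  by move=> x v _; exact: is_cvg_near_cst _ (dq x v).
move=> v; have -> : (fun x => 'D_v (fun y : 'rV[R]_m => y ord0 j) x) = (fun _ => v ord0 j).
  by apply/funext => x; exact: lim_near_cst (dq x v).
exact: Ck_cst.
Unshelve. all: by end_near. Qed.

End CkRow.

Section Row4.
Context {R : realType}.
Implicit Types (U : set 'rV[R]_4) (v : 'rV[R]_4).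

Lemma c4_mk4 (x0 x1 x2 x3 : R) i : (i < 4)%N ->
  c4 (mk4 x0 x1 x2 x3) i = [:: x0; x1; x2; x3]`_i.
Proof. by move=> i4; rewrite /c4 mxE inordK. Qed.

Lemma mk4_c4 v : mk4 (c4 v 0) (c4 v 1) (c4 v 2) (c4 v 3) = v.
Proof.
apply/rowP => i; rewrite mxE /c4 (ord1 ord0).
by case: i => [[|[|[|[|k]]]] ik] //=; congr (v _ _); apply/val_inj; rewrite /= inordK.
Qed.

Lemma Ck_c4 n U i : Ck n U (fun v => c4 v i).
Proof. exact: Ck_coord. Qed.

Lemma Ck_mk4 n U (f0 f1 f2 f3 : 'rV[R]_4 -> R) : open U ->
  Ck n U f0 -> Ck n U f1 -> Ck n U f2 -> Ck n U f3 ->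
  Ck n U (fun v => mk4 (f0 v) (f1 v) (f2 v) (f3 v)).
Proof.
move=> oU C0 C1 C2 C3; apply: Ck_row oU _ => j.
have -> : (fun v => mk4 (f0 v) (f1 v) (f2 v) (f3 v) ord0 j) =
    (fun v => [:: f0 v; f1 v; f2 v; f3 v]`_j) by apply/funext => v; rewrite mxE.
by case: j => [[|[|[|[|k]]]] jk].
Qed.

Lemma open_strip (rm rp : R) : open [set v : 'rV[R]_4 | rm < c4 v 0 < rp].
Proof.
have -> : [set v : 'rV[R]_4 | rm < c4 v 0 < rp] =
    (fun v => c4 v 0) @^-1` [set` `]rm, rp[] by apply/seteqP; split => v; rewrite /= in_itv.
by apply: open_comp (@itv_open _ _ rm rp) => v _; exact: coord_continuous.
Qed.

Lemma iterD_Ck U (f : 'rV[R]_4 -> 'rV[R]_4) (vs : seq 'rV[R]_4) n :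
  Ck (size vs + n)%N U f -> Ck n U (Defs.iterD vs f).
Proof.
elim: vs n => [|v vs IH] n //.
by rewrite [size _]/= addSnnS => /IH [_ [_ Cf]]; exact: Cf.
Qed.

Lemma Ck_smooth_on U (f : 'rV[R]_4 -> 'rV[R]_4) :
  open U -> (forall n, Ck n U f) -> smooth_on U f.
Proof.
move=> oU Cf; split => // vs; split.
- by move=> x v Ux; have [_ [df _]] := iterD_Ck (Cf (size vs + 1)%N); exact: df.
- by move=> x Ux; apply: Ck_cont (iterD_Ck (Cf (size vs + 0)%N)) _ Ux.
Qed.

Lemma c4_shift_rot0 s al v : c4 (shift_rot s al v) 0 = s.
Proof. by rewrite c4_mk4. Qed.

Lemma shift_rot_comp t be s al v :
  shift_rot t be (shift_rot s al v) = shift_rot t (al + be) v.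
Proof. by rewrite /shift_rot !c4_mk4 //=; congr mk4; rewrite cosD sinD; ring. Qed.

Lemma shift_rot0 v : shift_rot (c4 v 0) 0 v = v.
Proof. by rewrite /shift_rot cos0 sin0 !mul1r !mul0r subr0 add0r mk4_c4. Qed.

Lemma Horizon_shift_rot s al v : Horizon (shift_rot s al v) <-> Horizon v.
Proof.
rewrite /Horizon /= /shift_rot !c4_mk4 //=.
have -> : (cos al * c4 v 1 - sin al * c4 v 2) ^+ 2 + (sin al * c4 v 1 + cos al * c4 v 2) ^+ 2 =
    (cos al ^+ 2 + sin al ^+ 2) * (c4 v 1 ^+ 2 + c4 v 2 ^+ 2) by ring.
by rewrite cos2Dsin2 mul1r.
Qed.

Lemma Ck_shift_rot n U (s al : 'rV[R]_4 -> R) : open U -> Ck n U s -> Ck n U al ->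
  Ck n U (fun v => shift_rot (s v) (al v) v).
Proof.
move=> oU Cs Cal.
have Ccos : Ck n U (fun v => cos (al v)) := Ck_comp oU (fun _ _ => I) (Ck_sin_cos n).2 Cal.
have Csin : Ck n U (fun v => sin (al v)) := Ck_comp oU (fun _ _ => I) (Ck_sin_cos n).1 Cal.
apply: Ck_mk4 => //; last exact: Ck_c4.
- exact: Ck_add oU (Ck_mul oU Ccos (Ck_c4 _ _ 1)) (Ck_opp oU (Ck_mul oU Csin (Ck_c4 _ _ 2))).
- exact: Ck_add oU (Ck_mul oU Csin (Ck_c4 _ _ 1)) (Ck_mul oU Ccos (Ck_c4 _ _ 2)).
Qed.

End Row4.

Section ShiftRotDiffeo.
Context {R : realType} (rm rp : R) (tau alpha iota : R -> R).
Hypotheses (Ctau : forall n, Ck n [set x | rm < x < rp] tau)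
  (Calpha : forall n, Ck n [set x | rm < x < rp] alpha)
  (Ciota : forall n, Ck n setT iota)
  (iota_in : forall y, rm < iota y < rp) (iotaK : cancel iota tau)
  (tauK : forall x, rm < x < rp -> iota (tau x) = x).

Lemma diffeomorphism_shift_rot : diffeomorphism (Sigma0 rm rp) (@Horizon R)
  (fun v => shift_rot (tau (c4 v 0)) (alpha (c4 v 0)) v).
Proof.
have oS := @open_strip R rm rp.
pose inv y := shift_rot (iota (c4 y 0)) (- alpha (iota (c4 y 0))) y.
split; [|split].
- by move=> v [_ Hv]; apply/Horizon_shift_rot.
- move=> p [p_in _]; exists [set v | rm < c4 v 0 < rp].
  exists (fun v => shift_rot (tau (c4 v 0)) (alpha (c4 v 0)) v); split => //; split => //.
  apply: (Ck_smooth_on oS) => n; apply: (Ck_shift_rot oS);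
    exact: Ck_comp oS (fun v Sv => Sv) _ (Ck_c4 n _ 0).
exists inv; split; [|split; [|split]].
- by move=> y Hy; split; [rewrite c4_shift_rot0|apply/Horizon_shift_rot].
- move=> x [x_in _].
  by rewrite /inv c4_shift_rot0 tauK // shift_rot_comp addrN shift_rot0.
- by move=> y _; rewrite /inv c4_shift_rot0 iotaK shift_rot_comp addNr shift_rot0.
- move=> p _; exists setT, inv; split => //; split => //.
  apply: Ck_smooth_on openT _ => n.
  have Ci : Ck n setT (fun v => iota (c4 v 0)) :=
    Ck_comp openT (fun _ _ => I) (Ciota n) (Ck_c4 n setT 0).
  apply: (Ck_shift_rot openT Ci (Ck_opp openT _)).
  exact: Ck_comp openT (fun v _ => iota_in (c4 v 0)) (Calpha n) Ci.
Qed.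

End ShiftRotDiffeo.

Section OrientedIntegral.
Context {R : realType}.
Notation mu := (@lebesgue_measure R).

Lemma oint_Rintegral_sub (g : R -> R) (c u r0 y : R) :
  mu.-integrable `[c, u] (EFin \o g) -> c <= r0 <= u -> c <= y <= u ->
  oint g r0 y = \int[mu]_(t in `[c, y]) g t - \int[mu]_(t in `[c, r0]) g t.
Proof.
move=> ig /andP[cr0 r0u] /andP[cy yu].
have iS a b : c <= a -> b <= u -> mu.-integrable `[a, b] (EFin \o g).
  by move=> ca bu; apply: integrableS ig => //; exact: subset_itvScc.
have split_at a b : c <= a -> a <= b -> b <= u ->
    \int[mu]_(t in `[c, b]) g t - \int[mu]_(t in `[c, a]) g t = \int[mu]_(t in `[a, b]) g t.
  move=> ca ab bu; rewrite (@Rintegral_itvB _ g (BLeft c) (BRight b) a) ?bnd_simp //;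
    last exact: iS.
  rewrite Rintegral_itv_obnd_cbnd //; apply: integrableS (iS a b ca bu) => //.
  exact: subset_itv_oc_cc.
rewrite /oint; case: ifPn => [r0y|]; first by rewrite split_at.
by rewrite -ltNge => yr0; rewrite -split_at ?opprB // ltW.
Qed.

Lemma derive_oint (g : R -> R) (p q r0 x : R) :
  (forall y, p < y < q -> {for y, continuous g}) -> p < r0 < q -> p < x < q ->
  derivable (oint g r0) x 1 /\ 'D_1 (oint g r0) x = g x.
Proof.
move=> cg /andP[pr0 r0q] /andP[px xq].
have [c [pc cx cr0]] : exists c, [/\ p < c, c < x & c < r0].
  by case: (leP x r0) => ?; [exists ((p + x) / 2)|exists ((p + r0) / 2)]; split; lra.
have [u [xu r0u uq]] : exists u, [/\ x < u, r0 < u & u < q].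
  by case: (leP x r0) => ?; [exists ((r0 + q) / 2)|exists ((x + q) / 2)]; split; lra.
have ig : mu.-integrable `[c, u] (EFin \o g).
  apply: continuous_compact_integrable; first exact: segment_compact.
  apply: continuous_in_subspaceT => y; rewrite inE /= in_itv /= => /andP[cy yu].
  by apply: cg; apply/andP; split; lra.
pose G y := \int[mu]_(t in `[c, y]) g t.
have near_G : \forall y \near x, G y - G r0 = oint g r0 y.
  apply: (@near_in_open _ [set y | c < y < u]); first exact: open_between.
    by rewrite /= cx xu.
  move=> y /andP[cy yu]; rewrite (@oint_Rintegral_sub g c u) //; apply/andP; split; lra.
have [dG DG] := continuous_FTC1_closed xu ig cx (cg x (introT andP (conj px xq))).
have dGB : derivable (fun y => G y - G r0) x 1 := derivableB dG (derivable_cst _ _ _).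
split; first exact: near_eq_derivable near_G dGB.
rewrite -(@near_eq_derive _ _ _ (fun y => G y - G r0) (oint g r0) x 1 near_G).
by rewrite (deriveB dG (derivable_cst _ _ _)) derive_cst subr0 -derive1E.
Qed.

Lemma Ck_oint (g : R -> R) (p q r0 : R) : p < r0 < q ->
  (forall n, Ck n [set x | p < x < q] g) -> forall n, Ck n [set x | p < x < q] (oint g r0).
Proof.
move=> r0_in Cg n; apply: CkS; apply: Ck_derive1; first exact: open_between.
  by move=> x x_in; have [] := derive_oint (Ck_cont (Cg 0%N)) r0_in x_in.
apply: Ck_ext (Cg n); first exact: open_between.
by move=> x x_in; have [_ ->] := derive_oint (Ck_cont (Cg 0%N)) r0_in x_in.
Qed.

End OrientedIntegral.

Section LogGrowth.
Context {R : realType}.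
Implicit Types (F : R -> R) (c p q s : R).

Lemma add_ln_dist_ndecr F c p (r0 : R) :
  (forall s, r0 <= s < p -> derivable F s 1 /\ c / (p - s) <= 'D_1 F s) ->
  forall s, r0 <= s < p -> F r0 + c * ln (p - r0) <= F s + c * ln (p - s).
Proof.
move=> HF s /andP[r0s sp]; pose G y := F y + c * ln (p - y).
have dG y : r0 <= y < p -> derivable G y 1 /\ 0 <= 'D_1 G y.
  move=> yI; have [dF DF] := HF y yI; have [dl Dl] := derive_ln_sub (andP yI).2.
  have dcl := @derivableM R R (fun _ => c) (fun y => ln (p - y)) y 1 (derivable_cst _ _ _) dl.
  split; first exact: (@derivableD R R R F (fun y => c * ln (p - y)) y 1 dF dcl).
  rewrite (@deriveD R R R F (fun y => c * ln (p - y)) y 1 dF dcl).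
  rewrite (@deriveM R R (fun _ => c) (fun y => ln (p - y)) y 1 (derivable_cst _ _ _) dl).
  by rewrite derive_cst Dl /GRing.scale /= mulr0 addr0 mulrN subr_ge0.
have yI y : y \in `]r0, s[ -> r0 <= y < p.
  by rewrite in_itv /= => /andP[r0y ys]; rewrite ltW //= (lt_trans ys).
apply: (@ger0_derive1_ndecr R G r0 s) => //.
- by move=> y /yI /dG [].
- by move=> y /yI /dG []; rewrite derive1E.
- apply: continuous_in_subspaceT => y; rewrite inE /= in_itv /= => /andP[r0y ys].
  by apply: derivable1_continuous; apply: (dG y _).1; rewrite r0y (le_lt_trans ys).
Qed.

Lemma ge_inv_derive1_unbounded_above F c p (r0 : R) : 0 < c -> r0 < p ->
  (forall s, r0 <= s < p -> derivable F s 1 /\ c / (p - s) <= 'D_1 F s) ->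
  forall B, exists s, r0 < s < p /\ B <= F s.
Proof.
move=> c0 r0p HF B.
(* For s := p - e^(-N), add_ln_dist_ndecr gives F s >= K - c ln (p - s) = K + c N >= B. *)
pose K := F r0 + c * ln (p - r0).
pose N := `|B - K| / c + `|ln (p - r0)| + 1.
pose s := p - expR (- N).
have sp : s < p by rewrite /s ltrBlDr ltrDl expR_gt0.
have r0s : r0 < s.
  rewrite /s ltrBrDl -ltrBrDr -[X in _ < X]lnK ?posrE ?subr_gt0 // ltr_expR.
  have : - ln (p - r0) <= `|ln (p - r0)| by rewrite -normrN ler_norm.
  have : 0 <= `|B - K| / c by rewrite divr_ge0 // ltW.
  rewrite /N; lra.
exists s; split; first by rewrite r0s sp.
have := add_ln_dist_ndecr HF (introT andP (conj (ltW r0s) sp)).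
have -> : p - s = expR (- N) by rewrite /s opprB addrC subrK.
rewrite expRK -/K /N mulrN !mulrDr mulrC divfK ?gt_eqF // mulr1.
have : B - K <= `|B - K| := ler_norm _.
have : 0 <= c * `|ln (p - r0)| by rewrite mulr_ge0 // ltW.
lra.
Qed.

Lemma ge_inv_derive1_unbounded_below F c q (r0 : R) : 0 < c -> q < r0 ->
  (forall s, q < s <= r0 -> derivable F s 1 /\ c / (s - q) <= 'D_1 F s) ->
  forall B, exists s, q < s < r0 /\ F s <= B.
Proof.
move=> c0 qr0 HF B.
have HG s : - r0 <= s < - q ->
    derivable (fun y => - F (- y)) s 1 /\ c / (- q - s) <= 'D_1 (fun y => - F (- y)) s.
  move=> /andP[r0s sq]; have sI : q < - s <= r0 by rewrite ltrNr lerNl sq r0s.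
  have [dF DF] := HF _ sI; have [dG ->] := derive_reflect dF.
  by split => //; rewrite addrC.
have Nqr0 : - r0 < - q by rewrite ltrN2.
have [s [/andP[r0s sq] Bs]] := ge_inv_derive1_unbounded_above c0 Nqr0 HG (- B).
by exists (- s); rewrite ltrNr ltrNl sq r0s -lerN2.
Qed.

End LogGrowth.

Lemma lambdaK_gt0 {R : realType} (a Lam : R) : 0 <= Lam -> 0 < lambdaK a Lam.
Proof.
move=> Lam_ge0; rewrite /lambdaK.
have : 0 <= Lam * a ^+ 2 / 3 by rewrite divr_ge0 // mulr_ge0 // sqr_ge0.
lra.
Qed.

Lemma Ck_Delta {R : realType} (M a Lam : R) n (U : set R) :
  open U -> Ck n U (Delta_r M a Lam).
Proof.
move=> oU; apply: (@Ck_ext R R R n U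
    (fun r => (r * r + a ^+ 2) * (1 + (- (Lam / 3)) * (r * r)) + (- (2 * M)) * r)) => //.
  by move=> r _; rewrite /Delta_r; ring.
have Cid := @Ck_id R R n U; have Csq := Ck_mul oU Cid Cid.
exact: Ck_add oU (Ck_mul oU (Ck_add oU Csq (Ck_cst _ _ _))
  (Ck_add oU (Ck_cst _ _ _) (Ck_mul oU (Ck_cst _ _ _) Csq))) (Ck_mul oU (Ck_cst _ _ _) Cid).
Qed.

Section DeltaNearRoots.
Context {R : realType} (M a Lam : R).
Local Notation Delta := (Delta_r M a Lam).

Lemma Delta_le_dist_right (rp : R) : 0 < M -> 0 <= Lam -> 0 <= rp -> Delta rp = 0 ->
  exists K, 0 < K /\ forall s, 0 <= s <= rp -> Delta s <= K * (rp - s).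
Proof.
move=> M_gt0 Lam_ge0 rp_ge0 Delta_rp.
have L3 : 0 <= Lam / 3 by rewrite divr_ge0.
have La : 0 <= Lam * a ^+ 2 / 3 by rewrite divr_ge0 // mulr_ge0 // sqr_ge0.
have L3rp : 0 <= Lam / 3 * (2 * rp) * (2 * rp ^+ 2) by rewrite !mulr_ge0 // sqr_ge0.
have Larp : 0 <= Lam * a ^+ 2 / 3 * (2 * rp) by rewrite mulr_ge0 // mulr_ge0.
exists (Lam / 3 * (2 * rp) * (2 * rp ^+ 2) + Lam * a ^+ 2 / 3 * (2 * rp) + 2 * M).
split=> [|s /andP[s_ge0 s_le]]; first lra.
pose Q := - (s + rp) + Lam / 3 * (s + rp) * (s ^+ 2 + rp ^+ 2)
  + Lam * a ^+ 2 / 3 * (s + rp) + 2 * M.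
have -> : Delta s = (rp - s) * Q by rewrite -[Delta s]subr0 -Delta_rp /Delta_r /Q; ring.
rewrite [X in _ <= X]mulrC; apply: ler_wpM2l; first lra.
have h3 : s + rp <= 2 * rp by lra.
have h4 : s ^+ 2 + rp ^+ 2 <= 2 * rp ^+ 2.
  have : s ^+ 2 <= rp ^+ 2 by rewrite ler_sqr ?nnegrE.
  lra.
have k1 : Lam / 3 * (s + rp) * (s ^+ 2 + rp ^+ 2) <= Lam / 3 * (2 * rp) * (2 * rp ^+ 2).
  by rewrite ler_pM ?mulr_ge0 ?addr_ge0 ?sqr_ge0 ?ler_wpM2l //; lra.
have k2 : Lam * a ^+ 2 / 3 * (s + rp) <= Lam * a ^+ 2 / 3 * (2 * rp) by exact: ler_wpM2l.
rewrite /Q; lra.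
Qed.

Lemma Delta_le_dist_left (rm rp s : R) : 0 <= M -> 0 <= Lam -> 0 <= rm -> Delta rm = 0 ->
  rm <= s <= rp -> Delta s <= 2 * rp * (s - rm).
Proof.
move=> M_ge0 Lam_ge0 rm_ge0 Delta_rm /andP[rm_s s_rp].
pose Q := (s + rm) - Lam / 3 * (s + rm) * (s ^+ 2 + rm ^+ 2) - Lam * a ^+ 2 / 3 * (s + rm) - 2 * M.
have -> : Delta s = (s - rm) * Q by rewrite -[Delta s]subr0 -Delta_rm /Delta_r /Q; ring.
rewrite [X in _ <= X]mulrC; apply: ler_wpM2l; first lra.
have srm_ge0 : 0 <= s + rm by lra.
have : 0 <= Lam / 3 * (s + rm) * (s ^+ 2 + rm ^+ 2).
  by rewrite mulr_ge0 ?addr_ge0 ?sqr_ge0 // mulr_ge0 // divr_ge0.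
have : 0 <= Lam * a ^+ 2 / 3 * (s + rm) by rewrite mulr_ge0 // divr_ge0 // mulr_ge0 // sqr_ge0.
rewrite /Q; lra.
Qed.

End DeltaNearRoots.

Definition dTfun {R : realType} (M a Lam s : R) : R :=
  lambdaK a Lam * (a ^+ 2 + s ^+ 2) / Delta_r M a Lam s.

Section DeSitterKerr.
Context {R : realType} (M a Lam rm rp r0 : R).
Local Notation Delta := (Delta_r M a Lam).
Local Notation T := (Tfun M a Lam r0).
Local Notation dT := (dTfun M a Lam).
Local Notation Ir := [set x : R | rm < x < rp].
Local Notation open_Ir := (@open_between R rm rp).

Hypotheses (M_gt0 : 0 < M) (Lam_gt0 : 0 < Lam) (rm_gt0 : 0 < rm)
  (Delta_rm : Delta rm = 0) (Delta_rp : Delta rp = 0)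
  (Delta_gt0 : forall r, rm < r < rp -> 0 < Delta r) (r0_in : rm < r0 < rp).

Lemma Ck_invDelta n : Ck n Ir (fun s => (Delta s)^-1).
Proof.
apply: (Ck_comp open_Ir _ (Ck_inv n) (Ck_Delta _ _ _ n open_Ir)).
by move=> r r_in; rewrite /= gt_eqF // Delta_gt0.
Qed.

Lemma Ck_dT n : Ck n Ir dT.
Proof.
apply: (Ck_mul open_Ir _ (Ck_invDelta n)).
apply: (Ck_mul open_Ir (Ck_cst _ _ _) (Ck_add open_Ir (Ck_cst _ _ _) _)).
exact: (@Ck_ext R R R n Ir (fun s => s * s) _ open_Ir) (Ck_mul open_Ir (Ck_id _ _) (Ck_id _ _)).
Qed.

Lemma Ck_T n : Ck n Ir T.
Proof. exact: Ck_oint r0_in Ck_dT n. Qed.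

Lemma Ck_A n : Ck n Ir (Afun M a Lam r0).
Proof.
apply: Ck_oint r0_in _ n => {}n.
exact: Ck_mul open_Ir (Ck_cst _ _ _) (Ck_invDelta n).
Qed.

Lemma derive_T x : rm < x < rp -> derivable T x 1 /\ 'D_1 T x = dT x.
Proof. exact: derive_oint (Ck_cont (Ck_dT 0%N)) r0_in. Qed.

Lemma dT_gt0 x : rm < x < rp -> 0 < dT x.
Proof.
move=> x_in; apply: divr_gt0 (Delta_gt0 x_in); apply: mulr_gt0; first exact/lambdaK_gt0/ltW.
rewrite ltr_wpDl ?sqr_ge0 // exprn_gt0 //.
by case/andP: x_in => rm_x _; exact: lt_trans rm_x.
Qed.

Lemma T_increasing : {in `]rm, rp[ &, {homo T : x y / x < y}}.
Proof.
have in_Ir x : x \in `]rm, rp[ -> rm < x < rp by rewrite in_itv.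
apply: gtr0_derive1_lt_oo.
- by move=> x /in_Ir /derive_T [].
- by move=> x /in_Ir x_in; rewrite derive1E (derive_T x_in).2 dT_gt0.
- move=> x; rewrite inE /= => /in_Ir x_in.
  exact: derivable1_continuous (derive_T x_in).1.
Qed.

Lemma dT_ge_inv K d s : 0 < K -> 0 < d -> rm < s < rp -> Delta s <= K * d ->
  lambdaK a Lam * rm ^+ 2 / K / d <= dT s.
Proof.
move=> K_gt0 d_gt0 s_in Delta_le; have D_gt0 := Delta_gt0 s_in.
have lam_gt0 : 0 < lambdaK a Lam by exact/lambdaK_gt0/ltW.
case/andP: s_in => rm_s _.
apply: (@le_trans _ _ (lambdaK a Lam * rm ^+ 2 / Delta s)).
  rewrite -mulrA -invfM ler_pM2l ?mulr_gt0 ?exprn_gt0 //.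
  by rewrite lef_pV2 ?posrE ?mulr_gt0.
rewrite ler_pM2r ?invr_gt0 // ler_pM2l // ler_wpDl ?sqr_ge0 //.
by rewrite ler_sqr ?nnegrE ?ltW // (lt_trans rm_gt0).
Qed.

Lemma T_unbounded_above B : exists s, r0 < s < rp /\ B <= T s.
Proof.
case/andP: r0_in => rm_r0 r0_rp; have rp_gt0 := lt_trans rm_gt0 (lt_trans rm_r0 r0_rp).
have [K [K_gt0 Delta_le]] := Delta_le_dist_right M_gt0 (ltW Lam_gt0) (ltW rp_gt0) Delta_rp.
apply: (@ge_inv_derive1_unbounded_above _ _ (lambdaK a Lam * rm ^+ 2 / K)) r0_rp _ B.
  by rewrite divr_gt0 ?mulr_gt0 ?exprn_gt0 ?lambdaK_gt0 ?ltW.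
move=> s /andP[r0_s s_rp]; have s_in : rm < s < rp by rewrite s_rp (lt_le_trans rm_r0).
have [dT_s ->] := derive_T s_in; split => //.
apply: dT_ge_inv => //; first by rewrite subr_gt0.
have s_gt0 : 0 < s := lt_trans rm_gt0 (lt_le_trans rm_r0 r0_s).
by apply: Delta_le; rewrite !ltW.
Qed.

Lemma T_unbounded_below B : exists s, rm < s < r0 /\ T s <= B.
Proof.
case/andP: r0_in => rm_r0 r0_rp; have rp_gt0 := lt_trans rm_gt0 (lt_trans rm_r0 r0_rp).
apply: (@ge_inv_derive1_unbounded_below _ _ (lambdaK a Lam * rm ^+ 2 / (2 * rp))) rm_r0 _ B.
  by rewrite divr_gt0 ?mulr_gt0 ?exprn_gt0 ?lambdaK_gt0 ?ltW.
move=> s /andP[rm_s s_r0]; have s_in : rm < s < rp by rewrite rm_s (le_lt_trans s_r0).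
have [dT_s ->] := derive_T s_in; split => //.
apply: dT_ge_inv => //; [by rewrite mulr_gt0|by rewrite subr_gt0|].
apply: (Delta_le_dist_left (ltW M_gt0) (ltW Lam_gt0) (ltW rm_gt0) Delta_rm).
by rewrite (ltW rm_s) (le_trans s_r0 (ltW r0_rp)).
Qed.

Lemma T_surjective y : exists r, rm < r < rp /\ T r = y.
Proof.
have [s2 [/andP[r0_s2 s2_rp] y_le]] := T_unbounded_above y.
have [s1 [/andP[rm_s1 s1_r0] le_y]] := T_unbounded_below y.
have s12 : s1 <= s2 by rewrite ltW // (lt_trans s1_r0).
have in_Ir z : s1 <= z <= s2 -> rm < z < rp.
  by case/andP=> s1z zs2; rewrite (lt_le_trans rm_s1) // (le_lt_trans zs2).
have cT : {within `[s1, s2], continuous T}.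
  apply: continuous_in_subspaceT => z; rewrite inE /= in_itv /= => /in_Ir z_in.
  exact: derivable1_continuous (derive_T z_in).1.
have y_between : Num.min (T s1) (T s2) <= y <= Num.max (T s1) (T s2).
  by rewrite ge_min le_y le_max y_le orbT.
have [r r_in Tr] := IVT s12 cT y_between.
by exists r; split => //; apply: in_Ir; rewrite in_itv in r_in.
Qed.

Definition Tinv (y : R) : R := xget r0 [set r | rm < r < rp /\ T r = y].

Lemma Tinv_spec y : rm < Tinv y < rp /\ T (Tinv y) = y.
Proof. exact: (xgetPex r0 (T_surjective y)). Qed.

Lemma TinvK r : rm < r < rp -> Tinv (T r) = r.
Proof.
move=> r_in; have [Tinv_in TK] := Tinv_spec (T r).
have T_in x : rm < x < rp -> x \in `]rm, rp[ by rewrite in_itv.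
case: (ltgtP (Tinv (T r)) r) => // lt.
- by have := T_increasing (T_in _ Tinv_in) (T_in _ r_in) lt; rewrite TK ltxx.
- by have := T_increasing (T_in _ r_in) (T_in _ Tinv_in) lt; rewrite TK ltxx.
Qed.

Lemma Ck_Tinv n : Ck n setT Tinv.
Proof.
apply: (Ck_inverse open_Ir Ck_T) => [x x_in|y|y|]; last exact: TinvK.
- by rewrite (derive_T x_in).2 gt_eqF // dT_gt0.
- exact: (Tinv_spec y).1.
- exact: (Tinv_spec y).2.
Qed.

Lemma Fminus_diffeomorphism : diffeomorphism (Sigma0 rm rp) (@Horizon R) (Fminus M a Lam r0).
Proof.
exact: (diffeomorphism_shift_rot Ck_T Ck_A Ck_Tinv (fun y => (Tinv_spec y).1)
  (fun y => (Tinv_spec y).2) TinvK).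
Qed.

Lemma Fplus_diffeomorphism : diffeomorphism (Sigma0 rm rp) (@Horizon R) (Fplus M a Lam r0).
Proof.
apply: (@diffeomorphism_shift_rot _ rm rp (fun r => - T r) (fun r => - Afun M a Lam r0 r)
  (fun y => Tinv (- y))).
- by move=> n; exact: Ck_opp open_Ir (Ck_T n).
- by move=> n; exact: Ck_opp open_Ir (Ck_A n).
- by move=> n; exact: Ck_comp openT (fun _ _ => I) (Ck_Tinv n) (Ck_opp openT (Ck_id _ _)).
- by move=> y; exact: (Tinv_spec (- y)).1.
- by move=> y; rewrite (Tinv_spec (- y)).2 opprK.
- by move=> r r_in; rewrite opprK TinvK.
Qed.

End DeSitterKerr.

Theorem mainTheorem15 (R : realType) (M a Lam rm rp r0 : R) :
  0 < M -> 0 < Lam -> 0 < rm -> rm < rp ->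
  Delta_r M a Lam rm = 0 -> Delta_r M a Lam rp = 0 ->
  (forall r, rm < r < rp -> 0 < Delta_r M a Lam r) ->
  rm < r0 < rp ->
  diffeomorphism (Sigma0 rm rp) (@Horizon R) (Fplus M a Lam r0) /\
  diffeomorphism (Sigma0 rm rp) (@Horizon R) (Fminus M a Lam r0).
Proof.
move=> M_gt0 Lam_gt0 rm_gt0 _ Delta_rm Delta_rp Delta_gt0 r0_in.
by split; [apply: Fplus_diffeomorphism|apply: Fminus_diffeomorphism].
Qed.
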